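(* Let $G$ be a strongly regular graph with parameters $(n,d,\lambda,\mu)$. If $\mathcal{P}_n,\mathcal{P}_{n-1},\dots,\mathcal{P}_k$ is a partial contraction sequence of $G$ of width at most $\operatorname{lb}_1(G)$, then $|P|\leq 2$ for every part $P\in\mathcal{P}_i$, for every $i$ with $k\leq i$ and $i\geq n-\lceil \operatorname{lb}_1(G)/2\rceil$.
   Context: All graphs are finite and simple. A graph of order $n$ is strongly regular with parameters $(n,d,\lambda,\mu)$ if it is $d$-regular and any two distinct adjacent vertices have exactly $\lambda$ common neighbors and any two distinct non-adjacent vertices have exactly $\mu$ common neighbors. For a partition $\mathcal{P}$ of $V(G)$, the quotient trigraph $G/\mathcal{P}$ has vertex set $\mathcal{P}$; two distinct parts $U,W$ are joined by a black edge if every pair $\{u,w\}$ with $u\in U,w\in W$ is an edge of $G$, are non-adjacent if no such pair is an edge, and are joined by a red edge otherwise; the red degree of a part is its number of incident red edges. A partial contraction sequence is a sequence $\mathcal{P}_n,\dots,\mathcal{P}_k$ of partitions of $V(G)$ where $\mathcal{P}_n$ is the partition into singletons and each $\mathcal{P}_i$ (which has $i$ parts) arises from $\mathcal{P}_{i+1}$ by merging two parts; its width is the maximum red degree over all $G/\mathcal{P}_i$. For $n\geq 2$, $\operatorname{lb}_1(G)$ is the minimum over all 2-element subsets $\{u,v\}\subseteq V(G)$ of the maximum red degree of $G/\mathcal{P}$ where $\mathcal{P}$ has $\{u,v\}$ as its only non-singleton part. *)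

From mathcomp Require Import all_boot.
Set Implicit Arguments. Unset Strict Implicit. Unset Printing Implicit Defensive.

Definition simple_graph (T : finType) (e : rel T) : Prop :=
  symmetric e /\ irreflexive e.

Definition strongly_regular (T : finType) (e : rel T) (n d lam mu : nat) : Prop :=
  [/\ #|T| = n,
      (forall x : T, #|[set y | e x y]| = d),
      (forall x y : T, x != y -> e x y -> #|[set z | e x z && e y z]| = lam)
    & (forall x y : T, x != y -> ~~ e x y -> #|[set z | e x z && e y z]| = mu)].

Definition red_edge (T : finType) (e : rel T) (U W : {set T}) : bool :=
  [&& U != W,
      [exists u in U, exists w in W, e u w]
    & [exists u in U, exists w in W, ~~ e u w]].

Definition red_deg (T : finType) (e : rel T) (P : {set {set T}}) (U : {set T}) : nat :=
  #|[set W in P | red_edge e U W]|.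

Definition max_red_deg (T : finType) (e : rel T) (P : {set {set T}}) : nat :=
  \max_(U in P) red_deg e P U.

Definition singletons (T : finType) : {set {set T}} := [set [set x] | x : T].

Definition pair_partition (T : finType) (u v : T) : {set {set T}} :=
  [set [set u; v]] :|: [set [set x] | x in [set: T] :\ u :\ v].

(* lb_1(G) (meaningful for #|T| >= 2; the default #|T| is only used when there is no pair) *)
Definition lb1 (T : finType) (e : rel T) : nat :=
  \big[minn/#|T|]_(p : T * T | p.1 != p.2) max_red_deg e (pair_partition p.1 p.2).

Definition merge_step (T : finType) (P Q : {set {set T}}) : Prop :=
  exists U W, [/\ U \in P, W \in P, U != W & Q = (P :\ U :\ W) :|: [set U :|: W]].

Definition partial_contraction_seq (T : finType) (Ps : nat -> {set {set T}}) (k : nat) : Prop :=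
  k <= #|T| /\ Ps #|T| = singletons T /\
  forall i, k <= i -> i < #|T| -> merge_step (Ps i.+1) (Ps i).

Definition width_le (T : finType) (e : rel T) (Ps : nat -> {set {set T}}) (k w : nat) : Prop :=
  forall i, k <= i -> i <= #|T| -> forall U, U \in Ps i -> red_deg e (Ps i) U <= w.

From mathcomp Require Import all_boot order zify.
Set Implicit Arguments. Unset Strict Implicit. Unset Printing Implicit Defensive.

(* In a d-regular graph, contracting a pair {a, b} creates red edges only towards the
   singletons of the vertices adjacent to exactly one of a and b; there are
   2 (d - |N(a) ∩ N(b)| - [ab ∈ E]) of them, an even number, so with t = ⌈lb₁/2⌉ every pair
   has at least 2t such distinguishing vertices.  Let a part P of 𝒫_i contain three vertices
   a, b, c.  Double counting the distinguishers of the three pairs gives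
   6t + 3 <= 2 |M| + 2 |P|, where M is the set of vertices outside P adjacent to some but
   not all of a, b, c.  Every vertex of M lies in a red neighbour of P, and the other parts
   are nonempty, so |P| + |M| + i <= n + reddeg(P) + 1.  With reddeg(P) <= lb₁ <= 2t and
   i >= n - t this yields 6t + 3 <= 6t + 2.  (The first count needs lb₁ >= 2, which
   follows from |P| + i <= n + 1.) *)

Lemma sum_mem_card (T : finType) (A : {pred T}) : \sum_(x : T) (x \in A) = #|A|.
Proof. by rewrite -sum1_card [RHS]big_mkcond; apply: eq_bigr => x _; case: (x \in A). Qed.

Section Partitions.
Variable T : finType.
Implicit Types (P Q R : {set {set T}}) (B U W : {set T}).

Definition merge_parts P U W := (P :\ U :\ W) :|: [set U :|: W].

Lemma merge_parts_partition P U W :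
    partition P [set: T] -> U \in P -> W \in P -> U != W ->
  partition (merge_parts P U W) [set: T] /\ #|merge_parts P U W| = #|P|.-1.
Proof.
move=> partP UP WP neqUW.
have WPU : W \in P :\ U by rewrite !inE eq_sym neqUW.
have partPUW := partitionD1 (partitionD1 partP UP) WPU.
have UW0 : U :|: W != set0.
  by apply: contraNneq (partition_neq0 partP UP); rewrite -subset0 => <-; apply: subsetUl.
have coverT : (U :|: W) :|: ([set: T] :\: U :\: W) = [set: T].
  by apply/setP => x; rewrite !inE; case: (x \in U); case: (x \in W).
rewrite /merge_parts setUC; split.
  rewrite -coverT; apply: partitionU1 => //.
  by rewrite -setI_eq0; apply/eqP/setP => x; rewrite !inE; case: (x \in U); case: (x \in W).
have notin : U :|: W \notin P :\ U :\ W.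
  apply: contra UW0 => /(partitionS partPUW).
  by rewrite setDDl subsetD => /andP [_]; rewrite -setI_eq0 setIid.
by rewrite cardsU1 notin (cardsD1 U P) UP (cardsD1 W (P :\ U)) WPU.
Qed.

Lemma singletons_partition : partition (singletons T) [set: T].
Proof.
apply/and3P; split.
- by apply/eqP/setP => x; rewrite cover_imset inE; apply/bigcupP; exists x; rewrite ?inE.
- apply/trivIsetP => _ _ /imsetP [x _ ->] /imsetP [y _ ->] neq_xy.
  by rewrite disjoints1 inE; apply: contraNneq neq_xy => ->.
- by apply/imsetP => -[x _ /setP /(_ x)]; rewrite !inE eqxx.
Qed.

Lemma card_singletons : #|singletons T| = #|T|.
Proof. by rewrite card_imset //; apply: set1_inj. Qed.

Lemma partition_card_cover Q B R :
    partition Q [set: T] -> B \in Q -> R \subset Q :\ B ->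
  #|B| + #|cover R| + #|Q| <= #|T| + #|R| + 1.
Proof.
move=> partQ BQ sRQ.
have rest : #|Q :\ B :\: R| <= \sum_(W in Q :\ B :\: R) #|W|.
  rewrite -sum1_card; apply: leq_sum => W; rewrite !inE => /and3P [_ _ WQ].
  by rewrite card_gt0 (partition_neq0 partQ WQ).
have coverR : #|cover R| <= \sum_(W in R) #|W| := leq_card_cover R.
rewrite -cardsT (card_partition partQ) (big_setD1 B BQ) /= (big_setID R) /= (setIidPr sRQ).
rewrite (cardsD1 B Q) BQ -(cardsID R (Q :\ B)) (setIidPr sRQ) /=.
move: coverR rest.
(* [set] merges occurrences that differ only in hidden coercions; [lia] would see distinct atoms. *)
set sR := \sum_(W in R) #|W|; set sS := \sum_(W in Q :\ B :\: R) #|W|.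
set nS := #|Q :\ B :\: R|.
lia.
Qed.
End Partitions.

Lemma partial_contraction_seq_partition (T : finType) (Ps : nat -> {set {set T}}) k :
    partial_contraction_seq Ps k ->
  forall i, k <= i -> i <= #|T| -> partition (Ps i) [set: T] /\ #|Ps i| = i.
Proof.
case=> le_kT [Ps_top merge_Ps].
suff down j : j <= #|T| - k -> partition (Ps (#|T| - j)) [set: T] /\ #|Ps (#|T| - j)| = #|T| - j.
  by move=> i le_ki le_iT; have := down (#|T| - i); rewrite subKn //; apply; lia.
elim: j => [|j IHj] le_jTk.
  by rewrite subn0 Ps_top card_singletons; split=> //; apply: singletons_partition.
have [partP cardP] := IHj (ltnW le_jTk).
have := merge_Ps (#|T| - j.+1) ltac:(lia) ltac:(lia).
have -> : (#|T| - j.+1).+1 = #|T| - j by lia.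
case=> U [W [UP WP neqUW ->]].
have [partM cardM] := merge_parts_partition partP UP WP neqUW.
by split=> //; rewrite cardM cardP; lia.
Qed.

Section Graph.
Variable T : finType.
Variable e : rel T.
Hypothesis e_sym : symmetric e.
Hypothesis e_irr : irreflexive e.

Definition distinguishers (a b : T) : {set T} :=
  [set x | (x != a) && (x != b) && (e a x != e b x)].

Lemma card_distinguishers d a b : (forall x, #|[set y | e x y]| = d) ->
  #|distinguishers a b| = (d - #|[set y | e a y] :&: [set y | e b y]| - e a b).*2.
Proof.
move=> regular.
have card_private_nbhs x y : #|[set y | e x y] :\: [set z | e y z] :\ y| =
                     d - #|[set y | e x y] :&: [set z | e y z]| - e x y.
  have := cardsD1 y ([set y | e x y] :\: [set z | e y z]).
  by rewrite cardsD regular !inE e_irr /=; lia.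
have -> : distinguishers a b =
    [set y | e a y] :\: [set z | e b z] :\ b :|: [set y | e b y] :\: [set z | e a z] :\ a.
  apply/setP => x; rewrite !inE.
  have [->|xa] := eqVneq x a; first by rewrite e_irr /= !andbF.
  have [->|xb] := eqVneq x b; first by rewrite e_irr /= !andbF.
  by case: (e a x); case: (e b x).
rewrite cardsU (_ : _ :&: _ = set0) ?cards0 ?subn0; last first.
  by apply/setP => x; rewrite !inE; case: (e a x); case: (e b x); rewrite ?andbF.
by rewrite !card_private_nbhs setIC [e b a]e_sym addnn.
Qed.

Lemma red_deg_pair_part a b : a != b ->
  red_deg e (pair_partition a b) [set a; b] <= #|distinguishers a b|.
Proof.
move=> neq_ab; rewrite /red_deg.
apply: leq_trans (leq_imset_card (fun x => [set x]) _).
apply/subset_leq_card/subsetP => W; rewrite !inE => /andP [/orP [/eqP ->|]].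
  by rewrite /red_edge eqxx.
case/imsetP => x; rewrite !inE => /andP [xb /andP [xa _]] ->.
case/and3P => _ /existsP [u /andP [ua /existsP [_ /andP [/set1P -> eux]]]].
case/existsP => [v /andP [va /existsP [_ /andP [/set1P -> evx]]]].
apply/imsetP; exists x => //; rewrite !inE xa xb /=.
by move: eux evx; case/set2P: ua => ->; case/set2P: va => ->; case: (e a x); case: (e b x).
Qed.

Lemma red_deg_singleton_part a b y : red_deg e (pair_partition a b) [set y] <= 1.
Proof.
rewrite /red_deg -(cards1 [set a; b]).
apply/subset_leq_card/subsetP => W; rewrite !inE => /andP [/orP [//|]].
case/imsetP => x _ ->.
case/and3P => _ /existsP [_ /andP [/set1P -> /existsP [_ /andP [/set1P -> eyx]]]].
by case/existsP => [_ /andP [/set1P -> /existsP [_ /andP [/set1P ->]]]]; rewrite eyx.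
Qed.

Lemma lb1_le_distinguishers a b : a != b -> lb1 e <= maxn #|distinguishers a b| 1.
Proof.
move=> neq_ab.
apply: (@Order.TotalTheory.bigmin_inf _ nat _ _ (a, b) _ _ _ neq_ab).
apply/bigmax_leqP => U; rewrite !inE => /orP [/eqP ->|/imsetP [y]].
  by apply: leq_trans (red_deg_pair_part neq_ab) (leq_maxl _ _).
move=> _ ->; exact: leq_trans (red_deg_singleton_part a b y) (leq_maxr _ _).
Qed.

Lemma double_uphalf_lb1_le d a b : (forall x, #|[set y | e x y]| = d) ->
  1 < lb1 e -> a != b -> (uphalf (lb1 e)).*2 <= #|distinguishers a b|.
Proof.
move=> regular lb1_gt1 neq_ab; have := lb1_le_distinguishers neq_ab.
by rewrite (card_distinguishers _ _ regular); lia.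
Qed.

Definition mixed (a b c : T) : {set T} :=
  [set x | [|| e a x, e b x | e c x] && ~~ [&& e a x, e b x & e c x]].

(* A vertex outside P distinguishes two of a, b, c only if it is mixed, and then it
   distinguishes exactly two pairs; a vertex of P lies in at most two of the sets, and
   a, b, c in at most one, which pays for the [+ 3]. *)
Lemma card_distinguishers3 (P : {set T}) a b c :
    a \in P -> b \in P -> c \in P -> a != b -> b != c -> c != a ->
  #|distinguishers a b| + #|distinguishers b c| + #|distinguishers c a| + 3
    <= 2 * #|mixed a b c :\: P| + 2 * #|P|.
Proof.
move=> aP bP cP neq_ab neq_bc neq_ca.
have sum_eq1 y : \sum_(x : T) (x == y) = 1 by rewrite -(card1 y) -sum_mem_card.
have pointwise x :
    (x \in distinguishers a b) + (x \in distinguishers b c) + (x \in distinguishers c a)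
      + ((x == a) + (x == b) + (x == c))
    <= 2 * (x \in mixed a b c :\: P) + 2 * (x \in P).
  have ac : a != c by rewrite eq_sym.
  rewrite !inE; have [->|xa] := eqVneq x a.
    by rewrite aP neq_ab ac (negbTE neq_ab) (negbTE ac) /=; case: (_ != _).
  have [->|xb] := eqVneq x b.
    by rewrite bP neq_bc (negbTE neq_bc) /=; case: (_ != _).
  have [->|xc] := eqVneq x c.
    by rewrite cP /=; case: (_ != _).
  by rewrite /=; case: (x \in P); case: (e a x); case: (e b x); case: (e c x).
have := @leq_sum _ (index_enum T) xpredT _ _ (fun x _ => pointwise x).
by rewrite !big_split /= big1_eq !sum_eq1 !sum_mem_card; lia.
Qed.

Lemma mixed_sub_cover_red Q (P : {set T}) a b c :
    partition Q [set: T] -> a \in P -> b \in P -> c \in P ->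
  mixed a b c :\: P \subset cover [set W in Q | red_edge e P W].
Proof.
move=> partQ aP bP cP; apply/subsetP => x.
rewrite !inE negb_and => /and3P [xP some_adj not_all_adj].
have xQ : x \in cover Q by rewrite (cover_partition partQ) inE.
apply/bigcupP; exists (pblock Q x); last by rewrite mem_pblock.
rewrite inE pblock_mem //=; apply/and3P; split.
- by apply: contraNneq xP => ->; rewrite mem_pblock.
- have [u uP eux] : exists2 u, u \in P & e u x.
    by case/or3P: some_adj => ?; [exists a | exists b | exists c].
  by apply/existsP; exists u; rewrite uP; apply/existsP; exists x; rewrite mem_pblock xQ.
- have [u uP eux] : exists2 u, u \in P & ~~ e u x.
    by rewrite negb_and in not_all_adj; case/or3P: not_all_adj => ?;
      [exists a | exists b | exists c].
  by apply/existsP; exists u; rewrite uP; apply/existsP; exists x; rewrite mem_pblock xQ.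
Qed.

Lemma red_deg_of_card_part_gt2 d Q (P : {set T}) :
    (forall x, #|[set y | e x y]| = d) -> partition Q [set: T] -> P \in Q ->
    2 < #|P| -> 1 < lb1 e ->
  3 * uphalf (lb1 e) + #|Q| < #|T| + red_deg e Q P.
Proof.
move=> regular partQ PQ /card_gt2P [a [b [c [[aP bP cP] [neq_ab neq_bc neq_ca]]]]] lb1_gt1.
set R := [set W in Q | red_edge e P W].
have sRQ : R \subset Q :\ P.
  by apply/subsetP => W; rewrite !inE => /andP [WQ /and3P [neqPW _ _]]; rewrite eq_sym neqPW.
have := partition_card_cover partQ PQ sRQ.
have := subset_leq_card (mixed_sub_cover_red partQ aP bP cP).
have := card_distinguishers3 aP bP cP neq_ab neq_bc neq_ca.
have := double_uphalf_lb1_le regular lb1_gt1 neq_ab.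
have := double_uphalf_lb1_le regular lb1_gt1 neq_bc.
have := double_uphalf_lb1_le regular lb1_gt1 neq_ca.
rewrite /red_deg -/R; lia.
Qed.

End Graph.

Theorem mainTheorem17 (T : finType) (e : rel T) (n d lam mu : nat)
  (Ps : nat -> {set {set T}}) (k : nat) :
  simple_graph e ->
  strongly_regular e n d lam mu ->
  2 <= n ->
  partial_contraction_seq Ps k ->
  width_le e Ps k (lb1 e) ->
  forall i, k <= i -> i <= n -> n - uphalf (lb1 e) <= i ->
  forall U, U \in Ps i -> #|U| <= 2.
Proof.
move=> [e_sym e_irr] [<- regular _ _] _ contraction width i le_ki le_in ge_i U UPs.
have [partPs cardPs] := partial_contraction_seq_partition contraction le_ki le_in.
rewrite leqNgt; apply/negP => U_gt2.
have := partition_card_cover partPs UPs (sub0set _); rewrite /cover big_set0 !cards0.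
have := width i le_ki le_in U UPs.
have [lb1_le1 | lb1_gt1] := leqP (lb1 e) 1; first by lia.
have := red_deg_of_card_part_gt2 e_sym e_irr regular partPs UPs U_gt2 lb1_gt1.
lia.
Qed.
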